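(* Let $K$ be a commutative ring with identity, let $A$ be a $K$-algebra with augmentation $\varepsilon:A\to K$ (a $K$-algebra epimorphism), and let $n\ge 0$. If $A$ is weak bi-$FP_n$, then $A$ is both left-$FP_n$ and right-$FP_n$.
   Context: A module is of type $FP_n$ if there is an exact sequence $0\leftarrow M\leftarrow P_0\leftarrow\cdots\leftarrow P_n$ with $P_0,\dots,P_n$ finitely generated free modules. $A$ is left-$FP_n$ (resp. right-$FP_n$) if $K$, regarded as a left (resp. right) $A$-module via $\varepsilon$, is of type $FP_n$. An $(A,A)$-bimodule is an abelian group $M$ with left and right $A$-actions satisfying $(am)b=a(mb)$ and $km=mk$ for $k\in K$; the free bimodule of rank $r$ is a direct sum of $r$ copies of $A\otimes_K A$ with action $a(u\otimes v)b=au\otimes vb$. $A$ is weak bi-$FP_n$ if $K$, regarded as an $(A,A)$-bimodule via $a\cdot k\cdot a'=\varepsilon(a)k\varepsilon(a')$, has an exact sequence $0\leftarrow K\leftarrow F_0\leftarrow\cdots\leftarrow F_n$ with $F_0,\dots,F_n$ finitely generated free $(A,A)$-bimodules. *)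

From mathcomp Require Import all_boot all_order all_algebra.
Set Implicit Arguments.
Unset Strict Implicit.
Unset Printing Implicit Defensive.
Import GRing.Theory.
Local Open Scope ring_scope.

Section Defs.
Variables (K : comPzRingType) (A : algType K) (eps : A -> K).

Definition augmentation : Prop :=
  [/\ (forall x y, eps (x + y) = eps x + eps y),
      (forall x y, eps (x * y) = eps x * eps y),
      eps 1 = 1,
      (forall (k : K) (x : A), eps (k *: x) = k * eps x)
    & (forall k : K, exists x : A, eps x = k)].

(* The finitely generated free left (resp. right) A-module of rank r is
   A^r = 'rV[A]_r with the entrywise left (resp. right) action.          *)
Definition lact (r : nat) (a : A) (v : 'rV[A]_r) : 'rV[A]_r := a *: v.
Definition ract (r : nat) (a : A) (v : 'rV[A]_r) : 'rV[A]_r :=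
  map_mx (fun x => x * a) v.

Section OneSided.
Variables (act : forall r : nat, A -> 'rV[A]_r -> 'rV[A]_r)
          (kact : A -> K -> K).

Definition mod_linear (r s : nat) (f : 'rV[A]_r -> 'rV[A]_s) : Prop :=
  (forall u v, f (u + v) = f u + f v) /\
  (forall a u, f (act a u) = act a (f u)).

Definition aug_linear (r : nat) (f : 'rV[A]_r -> K) : Prop :=
  (forall u v, f (u + v) = f u + f v) /\
  (forall a u, f (act a u) = kact a (f u)).

(* K (with the action kact) is of type FP_n: there is an exact sequence
   0 <- K <- P_0 <- P_1 <- ... <- P_n with P_j = A^(r j) free of finite
   rank; d j : P_(j+1) -> P_j, aug : P_0 -> K.                            *)
Definition K_FP (n : nat) : Prop :=
  exists (r : nat -> nat)
         (d : forall j : nat, 'rV[A]_(r j.+1) -> 'rV[A]_(r j))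
         (aug : 'rV[A]_(r 0%N) -> K),
  [/\ aug_linear aug,
      (forall j, (j < n)%N -> mod_linear (d j)),
      (forall k : K, exists x, aug x = k),
      ((0 < n)%N -> forall x, aug x = 0 <-> exists y, d 0%N y = x)
    & (forall j, (j.+1 < n)%N ->
         forall x, d j x = 0 <-> exists y, d j.+1 y = x)].
End OneSided.

Definition left_FP (n : nat) : Prop :=
  K_FP (fun r a v => lact a v) (fun a k => eps a * k) n.

Definition right_FP (n : nat) : Prop :=
  K_FP (fun r a v => ract a v) (fun a k => k * eps a) n.

Record bimod := Bimod {
  bcar :> zmodType;
  bl : A -> bcar -> bcar;
  br : bcar -> A -> bcar;
  _ : forall a (m m' : bcar), bl a (m + m') = bl a m + bl a m';
  _ : forall a a' (m : bcar), bl (a + a') m = bl a m + bl a' m;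
  _ : forall m : bcar, bl 1 m = m;
  _ : forall a b (m : bcar), bl (a * b) m = bl a (bl b m);
  _ : forall a (m m' : bcar), br (m + m') a = br m a + br m' a;
  _ : forall a a' (m : bcar), br m (a + a') = br m a + br m a';
  _ : forall m : bcar, br m 1 = m;
  _ : forall a b (m : bcar), br m (a * b) = br (br m a) b;
  _ : forall a b (m : bcar), br (bl a m) b = bl a (br m b);
  _ : forall (k : K) (m : bcar), bl (k%:A) m = br m (k%:A)
}.

Definition bimod_hom (M N : bimod) (f : M -> N) : Prop :=
  [/\ (forall x y, f (x + y) = f x + f y),
      (forall a x, f (bl a x) = bl a (f x))
    & (forall a x, f (br x a) = br (f x) a)].

(* F is a free (A,A)-bimodule of rank r (i.e. isomorphic to the direct sum
   of r copies of A (x)_K A), expressed by the universal property of a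
   free bimodule on a basis g : 'I_r -> F in the category of (A,A)-bimodules
   above.                                                  *)
Definition free_bimod (F : bimod) (r : nat) : Prop :=
  exists g : 'I_r -> F,
    forall (M : bimod) (m : 'I_r -> M),
      (exists f : F -> M, bimod_hom f /\ forall i, f (g i) = m i) /\
      (forall f f' : F -> M, bimod_hom f -> bimod_hom f' ->
         (forall i, f (g i) = f' (g i)) -> forall x, f x = f' x).

Definition aug_bimod_hom (F : bimod) (f : F -> K) : Prop :=
  [/\ (forall x y, f (x + y) = f x + f y),
      (forall a x, f (bl a x) = eps a * f x)
    & (forall a x, f (br x a) = f x * eps a)].

Definition weak_biFP (n : nat) : Prop :=
  exists (F : nat -> bimod) (r : nat -> nat)
         (d : forall j : nat, F j.+1 -> F j) (aug : F 0%N -> K),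
  (forall j, (j <= n)%N -> free_bimod (F j) (r j)) /\
  [/\ aug_bimod_hom aug,
      (forall j, (j < n)%N -> bimod_hom (d j)),
      (forall k : K, exists x, aug x = k),
      ((0 < n)%N -> forall x, aug x = 0 <-> exists y, d 0%N y = x)
    & (forall j, (j.+1 < n)%N ->
         forall x, d j x = 0 <-> exists y, d j.+1 y = x)].

End Defs.

(* Restricted to the left action, the bimodule resolution F of K is an exact
   sequence L of left A-modules, which need not be finitely generated.  Reducing
   it modulo the augmentation on the right, F_j (x)_A K = A^(r_j), gives a
   complex Q of finitely generated free left modules and a chain map f : L -> Q
   over K; f commutes with the differentials because bimodule maps out of a free
   bimodule are determined by their values on a basis.
   Such a chain map already makes K of type FP_n.  Put P_k = Q_k (+) P_(k-1)
   with differential (q, p) |-> dQ q + c_(k-1) p, where G_k : P_k -> L_k lifts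
   a basis of P_k along the exact L and c_k = 1 - f G_k - dP_(k-1) is a
   correction term on P_k: if x is a cycle of P_k and dL y = G_k x, then x is
   the boundary of (f y, x).
   Right FP_n is left FP_n over the opposite algebra. *)

From HB Require Import structures.
From mathcomp Require Import all_boot all_order all_algebra.
From Stdlib Require Import ClassicalEpsilon.

Set Implicit Arguments.
Unset Strict Implicit.
Unset Printing Implicit Defensive.
Import GRing.Theory.
Local Open Scope ring_scope.

Section AdditiveMaps.
Variables (U V : zmodType) (h : U -> V).
Hypothesis hD : {morph h : x y / x + y}.

Lemma addmorph0 : h 0 = 0.
Proof. by apply: (addrI (h 0)); rewrite -hD !addr0. Qed.

Lemma addmorphB x y : h (x - y) = h x - h y.
Proof. by apply: (addIr (h y)); rewrite -hD !subrK. Qed.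

Lemma addmorph_sum m (F : 'I_m -> U) : h (\sum_i F i) = \sum_i h (F i).
Proof. exact: (big_morph h hD addmorph0). Qed.

End AdditiveMaps.

Lemma subrDD (V : zmodType) (a b c d x y : V) :
  a + b - (c + d) - (x + y) = a - c - x + (b - d - y).
Proof. by rewrite !opprD (addrACA a) (addrACA (a - c)). Qed.

Definition row_linear (R : pzRingType) m m' (h : 'rV[R]_m -> 'rV[R]_m') :=
  {morph h : u v / u + v} /\ forall a, {morph h : u / a *: u}.

Section LinearCombination.
Variables (R : pzRingType) (V : zmodType) (rho : R -> V -> V).

Definition lincomb m (w : 'I_m -> V) (v : 'rV[R]_m) : V := \sum_i rho (v 0 i) (w i).

Lemma lincombD m (w : 'I_m -> V) :
  (forall x, {morph rho ^~ x : a b / a + b}) -> {morph lincomb w : u v / u + v}.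
Proof.
move=> rhoDl u v; rewrite -big_split; apply: eq_bigr => i _.
by rewrite mxE rhoDl.
Qed.

Lemma lincombZ m (w : 'I_m -> V) :
    (forall a, {morph rho a : x y / x + y}) ->
    (forall a b x, rho (a * b) x = rho a (rho b x)) ->
  forall a v, lincomb w (a *: v) = rho a (lincomb w v).
Proof.
move=> rhoDr rhoA a v; rewrite /lincomb (addmorph_sum (rhoDr a)).
by apply: eq_bigr => i _; rewrite mxE rhoA.
Qed.

Lemma lincomb_delta m (w : 'I_m -> V) i :
  (forall x, rho 0 x = 0) -> (forall x, rho 1 x = x) ->
  lincomb w (delta_mx 0 i) = w i.
Proof.
move=> rho0 rho1; rewrite /lincomb (bigD1 i) //= big1 ?addr0.
  by rewrite mxE !eqxx rho1.
by move=> j /negbTE ji; rewrite mxE ji andbF rho0.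
Qed.

Lemma lincomb_eq m (h : 'rV[R]_m -> V) :
    {morph h : u v / u + v} -> (forall a u, h (a *: u) = rho a (h u)) ->
  h =1 lincomb (fun i => h (delta_mx 0 i)).
Proof.
move=> hD hZ v; rewrite {1}[v]row_sum_delta (addmorph_sum hD).
by apply: eq_bigr => i _; rewrite hZ.
Qed.

End LinearCombination.

Section ConeResolution.
Variables (K : comPzRingType) (A : algType K) (kact : A -> K -> K) (n : nat).

Unset Implicit Arguments.
Variables (L : nat -> zmodType) (actL : forall j, A -> L j -> L j).
Variables (dL : forall j, L j.+1 -> L j) (augL : L 0 -> K).
Variables (r : nat -> nat) (dQ : forall j, 'rV[A]_(r j.+1) -> 'rV[A]_(r j)).
Variables (augQ : 'rV[A]_(r 0) -> K) (f : forall j, L j -> 'rV[A]_(r j)).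
Set Implicit Arguments.
Hypothesis actLDr : forall j (a : A), {morph actL j a : x y / x + y}.
Hypothesis actLDl : forall j (x : L j), {morph actL j ^~ x : a b / a + b}.
Hypothesis actLA : forall j a b x, actL j (a * b) x = actL j a (actL j b x).
Hypothesis dLD : forall j, (j < n)%N -> {morph dL j : x y / x + y}.
Hypothesis dL_act :
  forall j, (j < n)%N -> forall a x, dL j (actL j.+1 a x) = actL j a (dL j x).
Hypothesis augLD : {morph augL : x y / x + y}.
Hypothesis augL_act : forall a x, augL (actL 0 a x) = kact a (augL x).
Hypothesis augL_surj : forall k, exists x, augL x = k.
Hypothesis augL_exact :
  (0 < n)%N -> forall x, augL x = 0 -> exists y, dL 0 y = x.
Hypothesis dL_exact :
  forall j, (j.+1 < n)%N -> forall x, dL j x = 0 -> exists y, dL j.+1 y = x.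

Hypothesis dQ_linear : forall j, (j < n)%N -> row_linear (dQ j).
Hypothesis augQD : {morph augQ : u v / u + v}.
Hypothesis augQ_act : forall a u, augQ (a *: u) = kact a (augQ u).
Hypothesis fD : forall j, (j <= n)%N -> {morph f j : x y / x + y}.
Hypothesis f_act : forall j, (j <= n)%N -> forall a x, f j (actL j a x) = a *: f j x.
Hypothesis augQ_f : forall x, augQ (f 0 x) = augL x.
Hypothesis dQ_f : forall j, (j < n)%N -> forall x, dQ j (f j.+1 x) = f j (dL j x).
Hypothesis augQ_dQ : (0 < n)%N -> forall y, augQ (dQ 0 y) = 0.
Hypothesis dQ_dQ : forall j, (j.+1 < n)%N -> forall y, dQ j (dQ j.+1 y) = 0.

(* P k = Q_k (+) Q_(k-1) (+) ... (+) Q_0, with inQ and inP the inclusions of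
   the first summand and of the remaining ones. *)
Fixpoint cone_rank k : nat :=
  if k is k'.+1 then (r k'.+1 + cone_rank k')%N else r 0.

Local Notation P k := 'rV[A]_(cone_rank k).

Definition inQ k : 'rV[A]_(r k) -> P k :=
  if k is k'.+1 return 'rV[A]_(r k) -> P k then fun q => row_mx q 0 else id.

Definition inP k (p : P k) : P k.+1 := row_mx 0 p.

Definition cone_diff k (t : P k -> P k) (x : 'rV[A]_(r k.+1 + cone_rank k)) : P k :=
  inQ (dQ k (lsubmx x)) + t (rsubmx x).

Definition dL_preim j (y : L j) : L j.+1 := epsilon (inhabits 0) (fun x => dL j x = y).
Definition augL_preim (c : K) : L 0 := epsilon (inhabits 0) (fun x => augL x = c).

Fixpoint cone_stage k : (P k -> L k) * (P k -> P k) :=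
  if k is k'.+1 return (P k -> L k) * (P k -> P k) then
    let d' := cone_diff (cone_stage k').2 in
    let G := lincomb (actL k'.+1)
               (fun i => dL_preim ((cone_stage k').1 (d' (delta_mx 0 i)))) in
    (G, fun p => p - inQ (f k'.+1 (G p)) - inP (d' p))
  else
    let G := lincomb (actL 0) (fun i => augL_preim (augQ (delta_mx 0 i))) in
    (G, fun p => p - f 0 (G p)).

Definition toL k := (cone_stage k).1.
Definition corr k := (cone_stage k).2.
Arguments toL k : clear implicits.
Arguments corr k : clear implicits.
Definition dP k := cone_diff (corr k).
Arguments dP k : clear implicits.

Lemma inQ_linear k : row_linear (@inQ k).
Proof.
case: k => [|k] /=; first by split.
split=> [u v|a u]; first by rewrite add_row_mx addr0.
by rewrite scale_row_mx scaler0.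
Qed.

Lemma inP_linear k : row_linear (@inP k).
Proof.
split=> [u v|a u]; first by rewrite /inP add_row_mx addr0.
by rewrite /inP scale_row_mx scaler0.
Qed.

Lemma cone_diff_linear k (t : P k -> P k) :
  (k < n)%N -> row_linear t -> row_linear (cone_diff t).
Proof.
move=> kn [tD tZ]; have [iD iZ] := inQ_linear k; have [dD dZ] := dQ_linear kn.
split=> [u v|a u]; rewrite /cone_diff.
  by rewrite !raddfD /= dD iD tD addrACA.
by rewrite !linearZ /= dZ iZ tZ scalerDr.
Qed.

Lemma toL0E : toL 0 = lincomb (actL 0) (fun i => augL_preim (augQ (delta_mx 0 i))).
Proof. by []. Qed.

Lemma toLSE k :
  toL k.+1 = lincomb (actL k.+1) (fun i => dL_preim (toL k (dP k (delta_mx 0 i)))).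
Proof. by []. Qed.

Lemma corr0E p : corr 0 p = p - f 0 (toL 0 p).
Proof. by []. Qed.

Lemma corrSE k p : corr k.+1 p = p - inQ (f k.+1 (toL k.+1 p)) - inP (dP k p).
Proof. by []. Qed.

Lemma toL_additive k : {morph toL k : u v / u + v}.
Proof. by case: k => [|k]; apply: lincombD. Qed.

Lemma toL0 k : toL k 0 = 0.
Proof. exact: addmorph0 (@toL_additive k). Qed.

Lemma toL_act k a u : toL k (a *: u) = actL k a (toL k u).
Proof. by case: k u => [|k] u; apply: lincombZ. Qed.

Lemma corr_linear k : (k <= n)%N -> row_linear (corr k).
Proof.
elim: k => [|k IH] kn.
  split=> [u v|a u]; rewrite !corr0E.
    by rewrite toL_additive fD // opprD addrACA.
  by rewrite toL_act f_act // scalerBr.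
have [dD dZ] : row_linear (dP k) := cone_diff_linear kn (IH (ltnW kn)).
have [iD iZ] := inQ_linear k.+1; have [sD sZ] := inP_linear k.
split=> [u v|a u]; rewrite !corrSE.
  by rewrite toL_additive fD // iD dD sD subrDD.
by rewrite toL_act f_act // iZ dZ sZ !scalerBr.
Qed.

Lemma dP_linear k : (k < n)%N -> row_linear (dP k).
Proof. by move=> kn; apply: cone_diff_linear => //; apply/corr_linear/ltnW. Qed.

Lemma dP_inQ k q : (k < n)%N -> dP k (@inQ k.+1 q) = inQ (dQ k q).
Proof.
move=> kn; have [cD _] := corr_linear (ltnW kn).
by rewrite /dP /cone_diff /= row_mxKl row_mxKr (addmorph0 cD) addr0.
Qed.

Lemma dP_inP k p : (k < n)%N -> dP k (inP p) = corr k p.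
Proof.
move=> kn; have [iD _] := inQ_linear k; have [dD _] := dQ_linear kn.
by rewrite /dP /cone_diff /inP row_mxKl row_mxKr (addmorph0 dD) (addmorph0 iD) add0r.
Qed.

Lemma augL_preimP c : augL (augL_preim c) = c.
Proof. exact: epsilon_spec (augL_surj c). Qed.

Lemma dL_preimP j y : (exists x, dL j x = y) -> dL j (dL_preim y) = y.
Proof. exact: epsilon_spec. Qed.

Lemma augL_toL0 v : augL (toL 0 v) = augQ v.
Proof.
rewrite toL0E /lincomb (addmorph_sum augLD) [RHS](lincomb_eq augQD augQ_act).
by apply: eq_bigr => i _; rewrite augL_act augL_preimP.
Qed.

Lemma augQ_corr0 p : augQ (corr 0 p) = 0.
Proof. by rewrite corr0E (addmorphB augQD) augQ_f augL_toL0 subrr. Qed.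

Lemma augQ_dP0 x : (0 < n)%N -> augQ (dP 0 x) = 0.
Proof. by move=> n0; rewrite /dP /cone_diff /= augQD augQ_dQ // augQ_corr0 addr0. Qed.

Lemma dL_toL k : (k < n)%N ->
    (forall i, exists y, dL k y = toL k (dP k (delta_mx 0 i))) ->
  forall v, dL k (toL k.+1 v) = toL k (dP k v).
Proof.
move=> kn liftable v; have [dD dZ] := dP_linear kn.
rewrite toLSE /lincomb (addmorph_sum (dLD kn)).
rewrite [RHS](@lincomb_eq _ _ (actL k) _ (fun v => toL k (dP k v))); first last.
- by move=> a u; rewrite dZ toL_act.
- by move=> u u'; rewrite dD toL_additive.
by apply: eq_bigr => i _; rewrite dL_act // dL_preimP.
Qed.

Lemma dP_dP k x : (k.+1 < n)%N ->
    (forall v, dL k (toL k.+1 v) = toL k (dP k v)) ->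
  let c := dP k (rsubmx x) in dP k (dP k.+1 x) = c - inQ (f k (toL k c)) - corr k c.
Proof.
move=> k1n dL_toLk c; have kn := ltnW k1n.
have [dD _] := dP_linear kn; have [iD _] := inQ_linear k.
rewrite [dP k.+1 x]/dP [cone_diff _ x]/cone_diff dD dP_inQ // dQ_dQ // (addmorph0 iD) add0r.
by rewrite corrSE !(addmorphB dD) dP_inQ // dQ_f // dL_toLk dP_inP.
Qed.

Lemma cone_chain k : (k < n)%N ->
  (forall v, dL k (toL k.+1 v) = toL k (dP k v)) /\
  ((k.+1 < n)%N -> forall x, dP k (dP k.+1 x) = 0).
Proof.
elim: k => [|k IH] kn.
  have dL_toL0 : forall v, dL 0 (toL 1 v) = toL 0 (dP 0 v).
    by apply: dL_toL => // i; apply: augL_exact => //; rewrite augL_toL0 augQ_dP0.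
  by split=> // k1n x; rewrite (dP_dP _ k1n dL_toL0) corr0E subrr.
have [dL_toLk dPdPk] := IH (ltnW kn).
have dL_toLk1 : forall v, dL k.+1 (toL k.+2 v) = toL k.+1 (dP k.+1 v).
  apply: dL_toL => // i; apply: dL_exact => //.
  by rewrite dL_toLk dPdPk // toL0.
split=> // k2n x; rewrite (dP_dP _ k2n dL_toLk1) corrSE dPdPk //.
by rewrite /inP row_mx0 subr0 subrr.
Qed.

Lemma cone_exact k x : (k < n)%N ->
    (exists y, dL k y = toL k x) -> corr k x = x - inQ (f k (toL k x)) ->
  exists z, dP k z = x.
Proof.
move=> kn [y dLy] corr_x; have [dD _] := dP_linear kn.
exists (inP x + @inQ k.+1 (f k.+1 y)).
by rewrite dD dP_inP // dP_inQ // dQ_f // dLy corr_x subrK.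
Qed.

Theorem cone_K_FP : K_FP (fun m a v => lact a v) kact n.
Proof.
exists cone_rank, dP, augQ; split.
- by split.
- by move=> j jn; apply: dP_linear.
- by move=> c; have [y <-] := augL_surj c; exists (f 0 y).
- move=> n0 x; split=> [augQx|[y <-]]; last exact: augQ_dP0.
  by apply: cone_exact => //; apply: augL_exact; rewrite // augL_toL0.
- move=> j j1n x; have [dL_toLj dPdPj] := cone_chain (ltnW j1n).
  split=> [dPx|[y <-]]; last exact: dPdPj.
  apply: cone_exact => //.
    by apply: dL_exact => //; rewrite dL_toLj dPx toL0.
  by rewrite corrSE dPx /inP row_mx0 subr0.
Qed.

End ConeResolution.

Section BimoduleAxioms.
Variables (K : comPzRingType) (A : algType K) (M : bimod A).

Lemma blDr a : {morph @bl _ _ M a : m m' / m + m'}.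
Proof. by case: M => ? ? ? *; auto. Qed.
Lemma blDl (m : M) : {morph (@bl _ _ M)^~ m : a a' / a + a'}.
Proof. by case: M m => ? ? ? *; auto. Qed.
Lemma bl1 (m : M) : bl 1 m = m.
Proof. by case: M m => ? ? ? *; auto. Qed.
Lemma blM a b (m : M) : bl (a * b) m = bl a (bl b m).
Proof. by case: M m => ? ? ? *; auto. Qed.
Lemma brDl a : {morph @br _ _ M ^~ a : m m' / m + m'}.
Proof. by case: M => ? ? ? *; auto. Qed.
Lemma brDr (m : M) : {morph br m : a a' / a + a'}.
Proof. by case: M m => ? ? ? *; auto. Qed.
Lemma br1 (m : M) : br m 1 = m.
Proof. by case: M m => ? ? ? *; auto. Qed.
Lemma brM a b (m : M) : br m (a * b) = br (br m a) b.
Proof. by case: M m => ? ? ? *; auto. Qed.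
Lemma br_bl a b (m : M) : br (bl a m) b = bl a (br m b).
Proof. by case: M m => ? ? ? *; auto. Qed.
Lemma bl_scalar k (m : M) : bl k%:A m = br m k%:A.
Proof. by case: M m => ? ? ? *; auto. Qed.

End BimoduleAxioms.

Lemma bimod_hom_comp (K : comPzRingType) (A : algType K) (M N P : bimod A)
    (h : M -> N) (h' : N -> P) :
  bimod_hom h -> bimod_hom h' -> bimod_hom (h' \o h).
Proof. by case=> hD hl hr [h'D h'l h'r]; split=> *; rewrite /= ?hD ?hl ?hr. Qed.

Definition free_basis (K : comPzRingType) (A : algType K) (F : bimod A) r
    (g : 'I_r -> F) :=
  forall (M : bimod A) (m : 'I_r -> M),
    (exists h : F -> M, bimod_hom h /\ forall i, h (g i) = m i) /\
    (forall h h' : F -> M, bimod_hom h -> bimod_hom h' ->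
       (forall i, h (g i) = h' (g i)) -> forall x, h x = h' x).

Lemma free_basis_ext (K : comPzRingType) (A : algType K) (F M : bimod A) r
    (g : 'I_r -> F) (h h' : F -> M) :
    free_basis g -> bimod_hom h -> bimod_hom h' ->
  (forall i, h (g i) = h' (g i)) -> h =1 h'.
Proof. by move=> free; apply: (free M (fun i => h (g i))).2. Qed.

Section Augmentation.
Variables (K : comPzRingType) (A : algType K) (eps : A -> K).
Hypothesis eps_aug : augmentation eps.

Lemma epsD : {morph eps : x y / x + y}. Proof. by case: eps_aug. Qed.
Lemma epsM : {morph eps : x y / x * y}. Proof. by case: eps_aug. Qed.
Lemma eps1 : eps 1 = 1. Proof. by case: eps_aug. Qed.
Lemma epsZ k x : eps (k *: x) = k * eps x. Proof. by case: eps_aug. Qed.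
Lemma eps0 : eps 0 = 0. Proof. exact: addmorph0 epsD. Qed.
Lemma eps_scalar k : eps k%:A = k. Proof. by rewrite epsZ eps1 mulr1. Qed.

(* (A (x)_K A)^r (x)_A K, i.e. A^r with A acting on the right through eps. *)
Definition row_bimod (r : nat) : bimod A.
Proof.
refine (@Bimod K A 'rV[A]_r (fun a v => a *: v) (fun v b => (eps b)%:A *: v)
          _ _ _ _ _ _ _ _ _ _) => *.
- exact: scalerDr.
- exact: scalerDl.
- exact: scale1r.
- by rewrite scalerA.
- exact: scalerDr.
- by rewrite epsD !scalerDl.
- by rewrite eps1 !scale1r.
- by rewrite epsM scalerA mulr_algl scalerA mulrC.
- by rewrite !scalerA mulr_algl mulr_algr.
- by rewrite eps_scalar.
Defined.

Definition K_bimod : bimod A.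
Proof.
refine (@Bimod K A K (fun a k => eps a * k) (fun k a => k * eps a)
          _ _ _ _ _ _ _ _ _ _) => *.
- exact: mulrDr.
- by rewrite epsD mulrDl.
- by rewrite eps1 mul1r.
- by rewrite epsM mulrA.
- exact: mulrDl.
- by rewrite epsD mulrDr.
- by rewrite eps1 mulr1.
- by rewrite epsM mulrA.
- by rewrite mulrA.
- exact: mulrC.
Defined.

Lemma aug_bimod_hom_K (M : bimod A) (f : M -> K) :
  aug_bimod_hom eps f -> bimod_hom (N := K_bimod) f.
Proof. by []. Qed.

End Augmentation.

Section ReductionModAugmentation.
Variables (K : comPzRingType) (A : algType K) (eps : A -> K) (n : nat).
Hypothesis eps_aug : augmentation eps.

Unset Implicit Arguments.
Variables (F : nat -> bimod A) (r : nat -> nat).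
Variables (d : forall j, F j.+1 -> F j) (aug : F 0 -> K).
Variables (g : forall j, 'I_(r j) -> F j).
Variables (red : forall j, F j -> row_bimod eps_aug (r j)).
Set Implicit Arguments.
Hypothesis g_free : forall j, (j <= n)%N -> free_basis (g j).
Hypothesis red_hom : forall j, (j <= n)%N -> bimod_hom (red j).
Hypothesis red_g : forall j, (j <= n)%N -> forall i, red j (g j i) = delta_mx 0 i.
Hypothesis aug_hom : aug_bimod_hom eps aug.
Hypothesis d_hom : forall j, (j < n)%N -> bimod_hom (d j).
Hypothesis aug_surj : forall k, exists x, aug x = k.
Hypothesis aug_exact : (0 < n)%N -> forall x, aug x = 0 <-> exists y, d 0 y = x.
Hypothesis d_exact :
  forall j, (j.+1 < n)%N -> forall x, d j x = 0 <-> exists y, d j.+1 y = x.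

Lemma aug_d y : (0 < n)%N -> aug (d 0 y) = 0.
Proof. by move=> n0; apply/aug_exact => //; exists y. Qed.

Lemma d_d j y : (j.+1 < n)%N -> d j (d j.+1 y) = 0.
Proof. by move=> j1n; apply/d_exact => //; exists y. Qed.

Definition red_dmx j : 'M[A]_(r j.+1, r j) := \matrix_i red j (d j (g j.+1 i)).

Definition red_d j (v : 'rV[A]_(r j.+1)) : 'rV[A]_(r j) := v *m red_dmx j.
Arguments red_d j v : clear implicits.

Definition red_aug : 'rV[A]_(r 0) -> K :=
  lincomb (fun a k => eps a * k) (fun i => aug (g 0 i)).

Lemma red_d_linear j : row_linear (red_d j).
Proof. by split=> [u v|a u]; rewrite /red_d (mulmxDl, scalemxAl). Qed.

Lemma red_d_hom j :
  bimod_hom (M := row_bimod eps_aug _) (N := row_bimod eps_aug _) (red_d j).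
Proof. by split=> [u v|a u|a u]; rewrite /= /red_d (mulmxDl, scalemxAl). Qed.

Lemma red_d_delta j i : red_d j (delta_mx 0 i) = red j (d j (g j.+1 i)).
Proof. by rewrite /red_d -rowE rowK. Qed.

Lemma red_augD : {morph red_aug : u v / u + v}.
Proof. by apply: lincombD => k a b; rewrite epsD // mulrDl. Qed.

Lemma red_aug_act a u : red_aug (a *: u) = eps a * red_aug u.
Proof.
by apply: lincombZ => [b k k'|b c k]; rewrite ?mulrDr // epsM // mulrA.
Qed.

Lemma red_aug_hom : aug_bimod_hom (F := row_bimod eps_aug (r 0)) eps red_aug.
Proof.
split=> [u v|a u|a u]; first exact: red_augD; first exact: red_aug_act.
by rewrite /= red_aug_act eps_scalar // mulrC.
Qed.

Lemma red_aug_delta i : red_aug (delta_mx 0 i) = aug (g 0 i).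
Proof.
by apply: lincomb_delta => k; rewrite ?eps0 ?eps1 // (mul0r, mul1r).
Qed.

Lemma red_chain j x : (j < n)%N -> red_d j (red j.+1 x) = red j (d j x).
Proof.
move=> jn; have jn' := ltnW jn.
have lhs_hom := bimod_hom_comp (red_hom jn) (red_d_hom j).
have rhs_hom := bimod_hom_comp (d_hom jn) (red_hom jn').
have agree i : (red_d j \o red j.+1) (g j.+1 i) = (red j \o d j) (g j.+1 i).
  by rewrite /= red_g // red_d_delta.
exact: free_basis_ext (g_free jn) lhs_hom rhs_hom agree x.
Qed.

Lemma red_aug_red x : red_aug (red 0 x) = aug x.
Proof.
have lhs_hom :=
  bimod_hom_comp (red_hom (leq0n n)) (aug_bimod_hom_K eps_aug red_aug_hom).
have agree i : (red_aug \o red 0) (g 0 i) = aug (g 0 i).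
  by rewrite /= red_g // red_aug_delta.
exact: free_basis_ext (g_free (leq0n n)) lhs_hom
  (aug_bimod_hom_K eps_aug aug_hom) agree x.
Qed.

Lemma red_d_d j y : (j.+1 < n)%N -> red_d j (red_d j.+1 y) = 0.
Proof.
move=> j1n; rewrite /red_d -mulmxA.
suff -> : red_dmx j.+1 *m red_dmx j = 0 by rewrite mulmx0.
apply/row_matrixP => i; rewrite row_mul rowK row0.
change (red_d j (red j.+1 (d j.+1 (g j.+2 i))) = 0).
have jn : (j < n)%N := ltnW j1n; have [redD _ _] := red_hom (ltnW jn).
by rewrite red_chain // d_d // (addmorph0 redD).
Qed.

Lemma red_aug_d y : (0 < n)%N -> red_aug (red_d 0 y) = 0.
Proof.
move=> n0; rewrite /red_d mulmx_sum_row (addmorph_sum red_augD) big1 // => i _.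
by rewrite red_aug_act rowK red_aug_red aug_d // mulr0.
Qed.

Theorem reduction_left_FP : left_FP eps n.
Proof.
apply: (cone_K_FP (actL := fun j => @bl _ _ (F j)) (dL := d)
          (dQ := red_d) (augQ := red_aug) (f := red)) => //.
- by move=> j a; apply: blDr.
- by move=> j x; apply: blDl.
- by move=> j a b x; apply: blM.
- by move=> j jn; case: (d_hom jn).
- by move=> j jn; case: (d_hom jn).
- by case: aug_hom.
- by case: aug_hom.
- by move=> n0 x augx; apply/aug_exact.
- by move=> j j1n x dx; apply/d_exact.
- by move=> j _; apply: red_d_linear.
- exact: red_augD.
- exact: red_aug_act.
- by move=> j jn; case: (red_hom jn).
- by move=> j jn; case: (red_hom jn).
- exact: red_aug_red.
- by move=> j jn x; apply: red_chain.
- by move=> n0 y; apply: red_aug_d.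
- by move=> j j1n y; apply: red_d_d.
Qed.

End ReductionModAugmentation.

Lemma left_FP_of_weak_biFP (K : comPzRingType) (A : algType K) (eps : A -> K) n :
  augmentation eps -> weak_biFP eps n -> left_FP eps n.
Proof.
move=> eps_aug [F [r [d [aug [F_free [aug_hom d_hom aug_surj aug_exact d_exact]]]]]].
pose g j := epsilon (inhabits (fun=> 0)) (@free_basis _ _ (F j) (r j)).
have g_free j : (j <= n)%N -> free_basis (g j).
  by move=> jn; apply: epsilon_spec; exact: F_free.
pose red_spec j (h : F j -> row_bimod eps_aug (r j)) :=
  bimod_hom h /\ forall i, h (g j i) = delta_mx 0 i.
pose red j := epsilon (inhabits (fun=> 0)) (red_spec j).
have redP j : (j <= n)%N -> red_spec j (red j).
  by move=> jn; apply: epsilon_spec; exact: (g_free j jn _ _).1.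
exact: (reduction_left_FP (red := red) g_free (fun j jn => (redP j jn).1)
          (fun j jn => (redP j jn).2) aug_hom d_hom aug_surj aug_exact d_exact).
Qed.

(* MathComp equips the converse A^c with its ring structure only; adding the
   K-algebra structure turns right A-modules into left [opposite A]-modules. *)
Definition opposite (K : comPzRingType) (A : algType K) : Type := A^c.

Section OppositeAlgebra.
Variables (K : comPzRingType) (A : algType K).
Local Notation Aop := (opposite A).

HB.instance Definition _ := GRing.NzRing.on Aop.
HB.instance Definition _ := GRing.Zmodule_isLmodule.Build K Aop
  (@scalerA K A) (@scale1r K A) (@scalerDr K A) (@scalerDl K A).

Fact opposite_scalerAl (k : K) (x y : Aop) : k *: (x * y) = k *: x * y.
Proof. exact: (@scalerAr K A k y x). Qed.

Fact opposite_scalerAr (k : K) (x y : Aop) : k *: (x * y) = x * (k *: y).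
Proof. exact: (@scalerAl K A k y x). Qed.

HB.instance Definition _ := GRing.Lmodule_isLalgebra.Build K Aop opposite_scalerAl.
HB.instance Definition _ := GRing.Lalgebra_isAlgebra.Build K Aop opposite_scalerAr.

Lemma opposite_augmentation (eps : A -> K) :
  augmentation eps -> augmentation (eps : Aop -> K).
Proof.
case=> epsD epsM eps1 epsZ eps_surj; split=> //.
by move=> x y; rewrite /= epsM mulrC.
Qed.

Definition bimod_op (M : bimod A) : bimod Aop.
Proof.
refine (@Bimod K Aop M (fun (a : Aop) m => @br _ A M m a)
          (fun m (a : Aop) => @bl _ A M a m)
          _ _ _ _ _ _ _ _ _ _) => *.
- exact: brDl.
- exact: brDr.
- exact: br1.
- exact: brM.
- exact: blDr.
- exact: blDl.
- exact: bl1.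
- exact: blM.
- by rewrite br_bl.
- by rewrite bl_scalar.
Defined.

Definition bimod_unop (M : bimod Aop) : bimod A.
Proof.
refine (@Bimod K A M (fun (a : A) m => @br _ Aop M m a)
          (fun m (a : A) => @bl _ Aop M a m)
          _ _ _ _ _ _ _ _ _ _) => *.
- exact: brDl.
- exact: brDr.
- exact: br1.
- exact: brM.
- exact: blDr.
- exact: blDl.
- exact: bl1.
- exact: blM.
- by rewrite br_bl.
- by rewrite bl_scalar.
Defined.

Lemma bimod_hom_op (M N : bimod A) (f : M -> N) :
  bimod_hom f -> bimod_hom (M := bimod_op M) (N := bimod_op N) f.
Proof. by case=> fD fl fr; split. Qed.

Lemma bimod_hom_opE (M : bimod A) (N : bimod Aop) (f : M -> N) :
  bimod_hom (M := bimod_op M) f <-> bimod_hom (N := bimod_unop N) f.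
Proof. by split=> -[fD fl fr]; split. Qed.

Lemma free_basis_op (F : bimod A) r (g : 'I_r -> F) :
  free_basis g -> free_basis (F := bimod_op F) g.
Proof.
move=> free M m; have [[h [h_hom hg]] h_uniq] := free (bimod_unop M) m.
split; first by exists h; split=> //; apply/bimod_hom_opE.
by move=> h1 h2 /bimod_hom_opE hom1 /bimod_hom_opE hom2; apply: h_uniq.
Qed.

Lemma weak_biFP_opposite (eps : A -> K) n :
  weak_biFP eps n -> weak_biFP (eps : Aop -> K) n.
Proof.
case=> F [r [d [aug [F_free [[augD augl augr] d_hom aug_surj aug_exact d_exact]]]]].
exists (fun j => bimod_op (F j)), r, d, aug; split.
  by move=> j /F_free [g g_free]; exists g; apply: free_basis_op.
split=> //; last by move=> j jn; apply: bimod_hom_op (d_hom j jn).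
by split=> // a x; rewrite mulrC /=; [apply: augr | apply: augl].
Qed.

Lemma right_FP_of_opposite (eps : A -> K) n :
  left_FP (eps : Aop -> K) n -> right_FP eps n.
Proof.
case=> r [d [aug [[augD aug_act] d_lin aug_surj aug_exact d_exact]]].
have lact_op m (a : A) (v : 'rV[A]_m) : lact (a : Aop) v = ract a v.
  by apply/matrixP => i j; rewrite !mxE.
exists r, d, aug; split=> //.
- by split=> // a u; rewrite -lact_op aug_act mulrC.
- by move=> j jn; have [dD d_act] := d_lin j jn; split=> // a u; rewrite -!lact_op d_act.
Qed.

End OppositeAlgebra.

Theorem mainTheorem4 (K : comPzRingType) (A : algType K) (eps : A -> K)
  (n : nat) :
  augmentation eps -> weak_biFP eps n -> left_FP eps n /\ right_FP eps n.
Proof.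
move=> eps_aug biFP; split; first exact: left_FP_of_weak_biFP.
apply: right_FP_of_opposite; apply: left_FP_of_weak_biFP.
  exact: opposite_augmentation.
exact: weak_biFP_opposite.
Qed.
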